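(* Fix $b\in\mathbb{Z}^{V_+}_{\ge0}$. For every $\bar x\in\mathcal{X}$, $$\mathrm{FLOW}(\bar x)=\Big\{y\in[\mathbf 0,b]^N:\ y^\xi(S)\ge\frac{d^\xi(S)}{C}+\bar x(E(S))-|S|\ \ \forall\emptyset\ne S\subseteq V_+,\ \forall\xi\in[N]\Big\}.$$
   Context: $G=(V,E)$ complete undirected graph with $V=\{0\}\cup V_+$ ($0$ depot, $V_+$ customers); $D=(V,A)$ replaces each edge by two opposite arcs; $\delta^-(v)$, $\delta^+(v)$ are the arcs entering/leaving $v$. Capacity $C>0$; scenarios $\xi\in[N]$ with demands $d^\xi\in\mathbb{Q}^{V_+}_{\ge0}$, $d^\xi(v)\le C$, probabilities $p_\xi\ge0$ summing to $1$; $\bar d=\sum_\xi p_\xi d^\xi$. $f(S)=\sum_{i\in S}f(i)$; $\delta(S)$: edges with exactly one end in $S$; $E(S)$: edges with both ends in $S$. $\mathcal{X}$ is one of $\mathcal{X}_{\mathrm{sub}}=\{x\in[0,2]^E: x(\delta(v))=2\ \forall v\in V_+,\ x(E(S))\le|S|-1\ \forall\emptyset\ne S\subseteq V_+\}$ or $\mathcal{X}_{\mathrm{cvrp}}=\mathcal{X}_{\mathrm{sub}}\cap\{x:x(\delta(0))=2k,\ x(E(S))\le|S|-\lceil\bar d(S)/C\rceil\}$. $[\mathbf 0,b]^N=\{y\in\mathbb{R}^{[N]\times V_+}:0\le y^\xi_v\le b_v\}$. For $\bar x\in\mathcal{X}$, $\mathrm{FLOW}(\bar x)$ is the set of $y\in[\mathbf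 0,b]^N$ for which there exist $f\in\mathbb{R}^{[N]\times A}_{\ge0}$, $g\in\mathbb{R}^{[N]\times V_+}_{\ge0}$ with $f^\xi(\delta^-(v))+d^\xi(v)=f^\xi(\delta^+(v))+g^\xi_v$ for all $v\in V_+,\xi$; $f^\xi_{(u,v)}\le\frac{C}{2}\bar x_{\{u,v\}}$ for all $(u,v)\in A,\xi$; $g^\xi_v\le Cy^\xi_v$ for all $v,\xi$. *)

From HB Require Import structures.
From mathcomp Require Import all_boot all_order all_algebra.
From mathcomp Require Import reals.
Set Implicit Arguments. Unset Strict Implicit. Unset Printing Implicit Defensive.
Import Order.TTheory GRing.Theory Num.Theory.
Local Open Scope ring_scope.

(* Vertices: V = {0} ∪ V_+ with V_+ = 'I_n (customers) and the depot 0 = None. *)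
Definition vert (n : nat) := option 'I_n.

Section Defs.
Variables (R : realType) (n N : nat).

(* An edge vector x ∈ R^E of the complete graph is represented by a symmetric
   function x : V -> V -> R (value x u v = x_{u,v} for u <> v; diagonal unused). *)

Definition xdelta (x : vert n -> vert n -> R) (v : vert n) : R :=
  \sum_(u : vert n | u != v) x u v.

Definition xE (x : vert n -> vert n -> R) (S : {set 'I_n}) : R :=
  \sum_(i in S) \sum_(j in S | (i < j)%N) x (Some i) (Some j).

Definition Xsub (x : vert n -> vert n -> R) : Prop :=
  [/\ (forall u v, x u v = x v u),
      (forall u v : vert n, u != v -> 0 <= x u v <= 2),
      (forall v : 'I_n, xdelta x (Some v) = 2) &
      (forall S : {set 'I_n}, S != set0 -> xE x S <= #|S|%:R - 1)].

Definition dbar (p : 'I_N -> R) (d : 'I_N -> 'I_n -> rat) (S : {set 'I_n}) : R :=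
  \sum_(xi < N) p xi * \sum_(i in S) ratr (d xi i).

Definition Xcvrp (k : nat) (p : 'I_N -> R) (d : 'I_N -> 'I_n -> rat) (C : R)
    (x : vert n -> vert n -> R) : Prop :=
  [/\ Xsub x,
      xdelta x None = 2 * k%:R &
      (forall S : {set 'I_n}, S != set0 ->
         xE x S <= #|S|%:R - (Num.ceil (dbar p d S / C))%:~R)].

Definition in_box (b : 'I_n -> nat) (y : 'I_N -> 'I_n -> R) : Prop :=
  forall xi i, 0 <= y xi i <= (b i)%:R.

Definition FLOW (C : R) (d : 'I_N -> 'I_n -> rat) (b : 'I_n -> nat)
    (x : vert n -> vert n -> R) (y : 'I_N -> 'I_n -> R) : Prop :=
  in_box b y /\
  exists (f : 'I_N -> vert n -> vert n -> R) (g : 'I_N -> 'I_n -> R),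
    [/\ (forall xi (u v : vert n), u != v -> 0 <= f xi u v),
        (forall xi i, 0 <= g xi i),
        (forall xi (i : 'I_n),
           \sum_(u : vert n | u != Some i) f xi u (Some i) + ratr (d xi i)
           = \sum_(w : vert n | w != Some i) f xi (Some i) w + g xi i),
        (forall xi (u v : vert n), u != v -> f xi u v <= C / 2 * x u v) &
        (forall xi i, g xi i <= C * y xi i)].

End Defs.

From HB Require Import structures.
From mathcomp Require Import all_boot all_order all_algebra.
From mathcomp Require Import reals ring lra.
Set Implicit Arguments. Unset Strict Implicit. Unset Printing Implicit Defensive.
Import Order.TTheory GRing.Theory Num.Theory.
Local Open Scope ring_scope.

(* Summing flow conservation over a customer set S shows that the demand of S
   not drained inside S leaves S through arcs of capacity (C/2) x, and since
   every customer has degree 2 these carry at most C (|S| - x(E(S))): this is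
   the cut inequality.  Conversely, one scenario is a flow problem with supplies
   d, arc capacities (C/2) x and drains C y at the customers (the depot drains
   freely); by a Gale-Hoffman type theorem it is feasible as soon as every cut
   condition holds, and for sets avoiding the depot these are the given
   inequalities.
   The Gale-Hoffman theorem is proved by induction on the arcs: the arc (a, b)
   is deleted after routing along it an amount t that keeps every cut condition
   true, whose existence follows from the submodularity of cut functions. *)

Lemma sum_net_outflow (V : finType) (M : zmodType) (f : V -> V -> M) (S : {set V}) :
  \sum_(v in S) (\sum_w f v w - \sum_w f w v) =
  \sum_(v in S) \sum_(w in ~: S) f v w - \sum_(v in S) \sum_(w in ~: S) f w v.
Proof.
have splitS (F : V -> M) : \sum_w F w = \sum_(w in S) F w + \sum_(w in ~: S) F w.
  by rewrite (bigID (mem S)) /=; congr (_ + _); apply: eq_bigl => w; rewrite inE.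
under eq_bigr do rewrite !splitS.
rewrite sumrB !big_split /= [X in _ - (X + _)]exchange_big /=.
by rewrite opprD addrACA subrr add0r.
Qed.

Section Network.
Variables (R : realFieldType) (V : finType).
Implicit Types (d c : V -> R) (u : V -> V -> R) (S T A B : {set V}).

(* A network on [V]: [d v] units are supplied at [v], at most [c v] units may
   be drained at [v], and the arc [(v, w)] carries at most [u v w].  The two
   slacks are those of the cut conditions of Gale and Hoffman. *)
Definition out_slack d c u S : R :=
  \sum_(v in S) c v + \sum_(v in S) \sum_(w in ~: S) u v w - \sum_(v in S) d v.

Definition in_slack d u S : R :=
  \sum_(v in S) d v + \sum_(v in ~: S) \sum_(w in S) u v w.

(* Both slacks are values of this form at 0/1 coefficients, which reduces every
   uncrossing inequality below to a pointwise check on the coefficients. *)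
Definition slack_form d c u (al be : V -> R) (ga : V -> V -> R) : R :=
  \sum_v c v * al v + \sum_v d v * be v + \sum_v \sum_w u v w * ga v w.

Lemma sum_setE S (F : V -> R) : \sum_(v in S) F v = \sum_v F v * (v \in S)%:R.
Proof.
by rewrite big_mkcond; apply: eq_bigr => v _; case: (v \in S); rewrite ?mulr1 ?mulr0.
Qed.

Lemma sum_cutE u S T :
  \sum_(v in S) \sum_(w in T) u v w =
  \sum_v \sum_w u v w * ((v \in S)%:R * (w \in T)%:R).
Proof.
rewrite (sum_setE S); apply: eq_bigr => v _; rewrite (sum_setE T) mulr_suml.
by apply: eq_bigr => w _; rewrite mulrAC -mulrA.
Qed.

Lemma out_slackE d c u S : out_slack d c u S =
  slack_form d c u (fun v => (v \in S)%:R) (fun v => - (v \in S)%:R)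
    (fun v w => (v \in S)%:R * (w \in ~: S)%:R).
Proof.
rewrite /out_slack /slack_form sum_cutE !(sum_setE S) addrAC; congr (_ + _ + _).
by rewrite -sumrN; apply: eq_bigr => v _; rewrite mulrN.
Qed.

Lemma in_slackE d c u S : in_slack d u S =
  slack_form d c u (fun=> 0) (fun v => (v \in S)%:R)
    (fun v w => (v \in ~: S)%:R * (w \in S)%:R).
Proof.
rewrite /in_slack /slack_form sum_cutE sum_setE.
by rewrite [X in X + _ + _]big1 ?add0r // => v _; rewrite mulr0.
Qed.

Lemma ler_sum_gap (F G : V -> R) a e :
  (forall v, F v <= G v) -> F a + e <= G a -> \sum_v F v + e <= \sum_v G v.
Proof.
move=> FG Fa; rewrite (bigD1 a) //= [leRHS](bigD1 a) //=.
have : \sum_(v | v != a) F v <= \sum_(v | v != a) G v by apply: ler_sum.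
lra.
Qed.

Lemma slack_form_uncross d c u a b al1 be1 ga1 al2 be2 ga2 al3 be3 ga3 al4 be4 ga4 :
  (forall v, 0 <= c v) -> (forall v w, 0 <= u v w) ->
  (forall v, al3 v + al4 v <= al1 v + al2 v) ->
  (forall v, be3 v + be4 v = be1 v + be2 v) ->
  (forall v w, ga3 v w + ga4 v w <= ga1 v w + ga2 v w) ->
  ga3 a b + ga4 a b + 1 <= ga1 a b + ga2 a b ->
  slack_form d c u al3 be3 ga3 + slack_form d c u al4 be4 ga4 + u a b <=
  slack_form d c u al1 be1 ga1 + slack_form d c u al2 be2 ga2.
Proof.
move=> c_ge0 u_ge0 al_le be_eq ga_le ga_ab; rewrite /slack_form.
have cal : \sum_v c v * al3 v + \sum_v c v * al4 v <=
           \sum_v c v * al1 v + \sum_v c v * al2 v.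
  by rewrite -!big_split; apply: ler_sum => v _ /=; rewrite -!mulrDr ler_wpM2l.
have dbe : \sum_v d v * be3 v + \sum_v d v * be4 v =
           \sum_v d v * be1 v + \sum_v d v * be2 v.
  by rewrite -!big_split; apply: eq_bigr => v _ /=; rewrite -!mulrDr be_eq.
have uga : \sum_v \sum_w u v w * ga3 v w + \sum_v \sum_w u v w * ga4 v w + u a b <=
           \sum_v \sum_w u v w * ga1 v w + \sum_v \sum_w u v w * ga2 v w.
  have uga_le v w : u v w * ga3 v w + u v w * ga4 v w <=
                    u v w * ga1 v w + u v w * ga2 v w.
    by rewrite -!mulrDr ler_wpM2l.
  rewrite -!big_split /=; apply: (ler_sum_gap (a := a)) => [v|].
    by rewrite -!big_split; apply: ler_sum => w _; exact: uga_le.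
  rewrite -!big_split /=; apply: (ler_sum_gap (a := b)) => [w|]; first exact: uga_le.
  by have := ler_wpM2l (u_ge0 a b) ga_ab; rewrite !mulrDr mulr1.
lra.
Qed.

Local Ltac decide_memberships :=
  rewrite ?inE;
  repeat match goal with
  | H : is_true (?v \in ?S) |- context [?v \in ?S] => rewrite H
  | H : is_true (?v \notin ?S) |- context [?v \in ?S] => rewrite (negbTE H)
  end;
  repeat match goal with |- context [?v \in ?S] => case: (v \in S) end;
  rewrite /=; lra.

Section Uncrossing.
Variables (d c : V -> R) (u : V -> V -> R) (a b : V).
Hypotheses (c_ge0 : forall v, 0 <= c v) (u_ge0 : forall v w, 0 <= u v w).

Lemma out_slack_uncross A B : a \in A -> b \notin A -> b \in B -> a \notin B ->
  out_slack d c u (A :|: B) + out_slack d c u (A :&: B) + u a b <=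
  out_slack d c u A + out_slack d c u B.
Proof.
by move=> *; rewrite !out_slackE; apply: slack_form_uncross => // *; decide_memberships.
Qed.

Lemma in_slack_uncross A B : a \in A -> b \notin A -> b \in B -> a \notin B ->
  in_slack d u (A :|: B) + in_slack d u (A :&: B) + u a b <=
  in_slack d u A + in_slack d u B.
Proof.
move=> *; rewrite !(in_slackE _ (fun=> 0)).
by apply: slack_form_uncross => // *; decide_memberships.
Qed.

Lemma out_in_slack_uncross A B : a \in A -> b \notin A -> a \in B -> b \notin B ->
  out_slack d c u (A :\: B) + in_slack d u (B :\: A) + u a b <=
  out_slack d c u A + in_slack d u B.
Proof.
move=> *; rewrite !out_slackE !(in_slackE _ c).
by apply: slack_form_uncross => // *; decide_memberships.
Qed.

Lemma in_out_slack_uncross A B : b \in A -> a \notin A -> b \in B -> a \notin B ->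
  in_slack d u (A :\: B) + out_slack d c u (B :\: A) + u a b <=
  in_slack d u A + out_slack d c u B.
Proof.
move=> *; rewrite !out_slackE !(in_slackE _ c).
by apply: slack_form_uncross => // *; decide_memberships.
Qed.

End Uncrossing.

Definition move_supply d (a b : V) (t : R) v : R :=
  d v - (if v == a then t else 0) + (if v == b then t else 0).

Definition drop_arc u (a b : V) v w : R := if (v, w) == (a, b) then 0 else u v w.

Lemma slack_form_shift d c u a b t al be ga :
  slack_form (move_supply d a b t) c (drop_arc u a b) al be ga =
  slack_form d c u al be ga - t * be a + t * be b - u a b * ga a b.
Proof.
rewrite /slack_form.
have supplyE : \sum_v move_supply d a b t v * be v =
               \sum_v d v * be v - t * be a + t * be b.
  transitivity (\sum_v (d v * be v - (if v == a then t * be v else 0)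
                                    + (if v == b then t * be v else 0))).
    by apply: eq_bigr => v _; rewrite /move_supply; do 2!case: eqP => _; ring.
  by rewrite big_split sumrB /= -!big_mkcond !big_pred1_eq.
have arcsE : \sum_v \sum_w drop_arc u a b v w * ga v w =
             \sum_v \sum_w u v w * ga v w - u a b * ga a b.
  rewrite !pair_bigA /= (bigD1 (a, b)) //= [in RHS](bigD1 (a, b)) //=.
  rewrite /drop_arc eqxx mul0r add0r addrAC subrr add0r.
  by apply: eq_bigr => -[v w] /negPf /= ->.
rewrite supplyE arcsE; ring.
Qed.

Lemma out_slack_shift d c u a b t S :
  out_slack (move_supply d a b t) c (drop_arc u a b) S =
  out_slack d c u S + t * (a \in S)%:R - t * (b \in S)%:R
    - u a b * ((a \in S)%:R * (b \in ~: S)%:R).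
Proof. by rewrite !out_slackE slack_form_shift; ring. Qed.

Lemma in_slack_shift d u a b t S :
  in_slack (move_supply d a b t) (drop_arc u a b) S =
  in_slack d u S - t * (a \in S)%:R + t * (b \in S)%:R
    - u a b * ((a \in ~: S)%:R * (b \in S)%:R).
Proof. by rewrite !(in_slackE _ (fun=> 0)) slack_form_shift. Qed.

Definition flow_feasible d c u := exists (f : V -> V -> R) (h : V -> R),
  [/\ forall v w, 0 <= f v w <= u v w, forall v, 0 <= h v <= c v &
      forall v, \sum_w f w v + d v = \sum_w f v w + h v].

Lemma flow_feasible_no_arcs d c u : (forall v w, u v w = 0) ->
  (forall v, 0 <= out_slack d c u [set v]) -> (forall v, 0 <= in_slack d u [set v]) ->
  flow_feasible d c u.
Proof.
move=> u_eq0 out_ge0 in_ge0; exists (fun _ _ => 0), d.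
have cut0 S T : \sum_(v in S) \sum_(w in T) u v w = 0.
  by rewrite big1 // => v _; rewrite big1.
split=> [v w|v|v]; first by rewrite u_eq0 lexx.
  have := out_ge0 v; have := in_ge0 v; rewrite /out_slack /in_slack !cut0 !big_set1.
  by move=> *; apply/andP; split; lra.
by rewrite !big1 // add0r addr0.
Qed.

Lemma flow_feasible_of_shift d c u a b t : 0 <= t <= u a b ->
  flow_feasible (move_supply d a b t) c (drop_arc u a b) -> flow_feasible d c u.
Proof.
move=> /andP[t_ge0 t_le] [f [h [f_bnd h_bnd f_cons]]].
exists (fun v w => f v w + (if (v, w) == (a, b) then t else 0)), h.
split=> // [v w|v].
  have /andP[] := f_bnd v w; rewrite /drop_arc.
  by case: eqP => [[-> ->]|_] f_ge0 f_le; rewrite ?addr0; apply/andP; split; lra.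
rewrite !big_split /=.
have in_t : \sum_w (if (w, v) == (a, b) then t else 0) = if v == b then t else 0.
  case: (eqVneq v b) => [->|vb]; last first.
    by rewrite big1 // => w _; rewrite xpair_eqE (negPf vb) andbF.
  rewrite -big_mkcond /=; under eq_bigl do rewrite xpair_eqE eqxx andbT.
  exact: big_pred1_eq.
have out_t : \sum_w (if (v, w) == (a, b) then t else 0) = if v == a then t else 0.
  case: (eqVneq v a) => [->|va]; last first.
    by rewrite big1 // => w _; rewrite xpair_eqE (negPf va).
  rewrite -big_mkcond /=; under eq_bigl do rewrite xpair_eqE eqxx.
  exact: big_pred1_eq.
have := f_cons v; rewrite /move_supply in_t out_t.
by set ta := if v == a then _ else _; set tb := if v == b then _ else _; lra.
Qed.

Section Shift.
Variables (d c : V -> R) (u : V -> V -> R) (a b : V).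
Hypotheses (c_ge0 : forall v, 0 <= c v) (u_ge0 : forall v w, 0 <= u v w).
Hypotheses (out_ge0 : forall S, 0 <= out_slack d c u S)
           (in_ge0 : forall S, 0 <= in_slack d u S).

Lemma exists_slack_preserving_shift : exists2 t, 0 <= t <= u a b &
  (forall S, 0 <= out_slack (move_supply d a b t) c (drop_arc u a b) S) /\
  (forall S, 0 <= in_slack (move_supply d a b t) (drop_arc u a b) S).
Proof.
(* For a set containing [a] but not [b], deleting the arc after routing [t]
   along it costs [u a b - t] to its out-slack and [t] to its in-slack; the
   roles are swapped for sets containing [b] but not [a].  [t] is the least
   amount for which the costs [u a b - t] are affordable, and uncrossing shows
   that the costs [t] are affordable too. *)
pose sep_ab S := (a \in S) && (b \notin S).
pose sep_ba S := (b \in S) && (a \notin S).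
pose t := Num.max (\big[Num.max/0]_(S | sep_ab S) (u a b - out_slack d c u S))
                  (\big[Num.max/0]_(S | sep_ba S) (u a b - in_slack d u S)).
have t_ge0 : 0 <= t by rewrite le_max bigmax_ge_id.
have t_le : t <= u a b by rewrite ge_max !bigmax_le // => S _; rewrite gerBl.
have out_ab S : sep_ab S -> u a b - out_slack d c u S <= t.
  by move=> ?; rewrite le_max le_bigmax_cond.
have in_ba S : sep_ba S -> u a b - in_slack d u S <= t.
  by move=> ?; rewrite le_max; apply/orP; right; exact: le_bigmax_cond.
have in_ab S : sep_ab S -> t <= in_slack d u S.
  move=> /andP[aS bS]; rewrite ge_max; apply/andP; split; apply: bigmax_le => // S'.
    move=> /andP[aS' bS']; have := out_in_slack_uncross d c_ge0 u_ge0 aS' bS' aS bS.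
    by have := out_ge0 (S' :\: S); have := in_ge0 (S :\: S'); lra.
  move=> /andP[bS' aS']; have := in_slack_uncross d u_ge0 aS bS bS' aS'.
  by have := in_ge0 (S :|: S'); have := in_ge0 (S :&: S'); lra.
have out_ba S : sep_ba S -> t <= out_slack d c u S.
  move=> /andP[bS aS]; rewrite ge_max; apply/andP; split; apply: bigmax_le => // S'.
    move=> /andP[aS' bS']; have := out_slack_uncross d c_ge0 u_ge0 aS' bS' bS aS.
    by have := out_ge0 (S' :|: S); have := out_ge0 (S' :&: S); lra.
  move=> /andP[bS' aS']; have := in_out_slack_uncross d c_ge0 u_ge0 bS' aS' bS aS.
  by have := in_ge0 (S' :\: S); have := out_ge0 (S :\: S'); lra.
exists t; first by rewrite t_ge0 t_le.
split=> S; [rewrite out_slack_shift | rewrite in_slack_shift].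
  have := out_ge0 S; have := out_ab S; have := out_ba S; rewrite /sep_ab /sep_ba inE.
  by case: (a \in S); case: (b \in S) => /=; lra.
have := in_ge0 S; have := in_ab S; have := in_ba S; rewrite /sep_ab /sep_ba inE.
by case: (a \in S); case: (b \in S) => /=; lra.
Qed.

End Shift.

Theorem flow_feasible_of_slacks d c u :
  (forall v, 0 <= c v) -> (forall v w, 0 <= u v w) ->
  (forall S, 0 <= out_slack d c u S) -> (forall S, 0 <= in_slack d u S) ->
  flow_feasible d c u.
Proof.
move=> c_ge0; set s := enum [set: V * V].
have : forall v w, (v, w) \notin s -> u v w = 0 by move=> v w; rewrite mem_enum inE.
elim: s d u => [|[a b] s IHs] d u u_supp u_ge0 out_ge0 in_ge0.
  by apply: flow_feasible_no_arcs => // v w; apply: u_supp.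
have [t t_bnd [out_ge0' in_ge0']] :=
  exists_slack_preserving_shift a b c_ge0 u_ge0 out_ge0 in_ge0.
apply: flow_feasible_of_shift t_bnd _; apply: IHs => // v w; rewrite /drop_arc.
  case: eqP => // /eqP vw_ab vw_s; apply: u_supp.
  by rewrite inE negb_or vw_ab.
by case: ifP.
Qed.

Lemma sum_cut_le_total u A B : (forall v w, 0 <= u v w) ->
  \sum_(v in A) \sum_(w in B) u v w <= \sum_v \sum_w u v w.
Proof.
move=> u_ge0; rewrite sum_cutE; apply: ler_sum => v _; apply: ler_sum => w _.
by rewrite ler_piMr //; case: (v \in A); case: (w \in B); rewrite ?mulr1 ?mulr0.
Qed.

Lemma out_slack_setD1_le d c u S v : (forall v w, 0 <= u v w) ->
  \sum_v' \sum_w u v' w <= c v - d v -> out_slack d c u (S :\ v) <= out_slack d c u S.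
Proof.
move=> u_ge0 cv_large; have [vS|vS] := boolP (v \in S); last first.
  have -> // : S :\ v = S.
  by apply/setP => w; rewrite !inE andb_idl // => wS; apply: contraNneq vS => <-.
rewrite /out_slack (big_setD1 (F := c) _ vS) (big_setD1 (F := d) _ vS) /=.
have := sum_cut_le_total (S :\ v) (~: (S :\ v)) u_ge0.
have : 0 <= \sum_(v in S) \sum_(w in ~: S) u v w.
  by apply: sumr_ge0 => v' _; apply: sumr_ge0.
lra.
Qed.

End Network.

Section Customers.
Variables (R : realType) (n : nat) (x : vert n -> vert n -> R).
Hypotheses (x_sym : forall u v, x u v = x v u)
           (x_deg : forall i : 'I_n, xdelta x (Some i) = 2).

Lemma sum_imset_Some (S : {set 'I_n}) (F : vert n -> R) :
  \sum_(v in Some @: S) F v = \sum_(i in S) F (Some i).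
Proof. by rewrite big_imset //; apply: in2W; apply: Some_inj. Qed.

Lemma sum_off_diagonal_xE (S : {set 'I_n}) :
  \sum_(i in S) \sum_(j in S | j != i) x (Some i) (Some j) = 2 * xE x S.
Proof.
have lowerE : \sum_(i in S) \sum_(j in S | (j < i)%N) x (Some i) (Some j) = xE x S.
  rewrite /xE; under eq_bigr do rewrite big_mkcondr.
  rewrite exchange_big; apply: eq_bigr => j _; rewrite big_mkcondr.
  by apply: eq_bigr => i _; rewrite x_sym.
have splitE i : \sum_(j in S | j != i) x (Some i) (Some j) =
    \sum_(j in S | (i < j)%N) x (Some i) (Some j) +
    \sum_(j in S | (j < i)%N) x (Some i) (Some j).
  rewrite (bigID (fun j : 'I_n => (i < j)%N)) /=; congr (_ + _); apply: eq_bigl => j.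
    by rewrite -andbA -val_eqE /=; case: (ltngtP i j).
  by rewrite -andbA -val_eqE /=; case: (ltngtP i j).
under eq_bigr do rewrite splitE.
by rewrite big_split /= lowerE /xE; ring.
Qed.

Lemma cut_weight (S : {set 'I_n}) :
  \sum_(v in Some @: S) \sum_(w in ~: (Some @: S)) x v w = 2 * (#|S|%:R - xE x S).
Proof.
set S' := Some @: S.
have deg_split v : v \in S' ->
    xdelta x v = \sum_(w in ~: S') x v w + \sum_(w in S' | w != v) x v w.
  move=> vS; rewrite /xdelta (bigID (mem S')) /= addrC; congr (_ + _).
    apply: eq_big => [w|w _]; last exact: x_sym.
    by rewrite inE; case: (eqVneq w v) => [->|]; rewrite ?vS ?andbT.
  by apply: eq_big => [w|w _]; [rewrite andbC | exact: x_sym].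
have degS : \sum_(v in S') xdelta x v = 2 * #|S|%:R.
  by rewrite sum_imset_Some (eq_bigr _ (fun i _ => x_deg i)) sumr_const mulr_natr.
have inner : \sum_(v in S') \sum_(w in S' | w != v) x v w = 2 * xE x S.
  rewrite -sum_off_diagonal_xE sum_imset_Some; apply: eq_bigr => i _.
  rewrite big_mkcondr sum_imset_Some [RHS]big_mkcondr; apply: eq_bigr => j _.
  by rewrite (inj_eq Some_inj).
have := degS; rewrite (eq_bigr _ deg_split) big_split /= inner; lra.
Qed.

(* One scenario of [FLOW], with drain capacities [cap] = C y. *)
Definition customer_flow (C : R) (dem cap : 'I_n -> R)
    (f : vert n -> vert n -> R) (g : 'I_n -> R) :=
  [/\ forall u v, u != v -> 0 <= f u v, forall i, 0 <= g i,
      forall i, \sum_(u | u != Some i) f u (Some i) + dem i =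
                \sum_(w | w != Some i) f (Some i) w + g i,
      forall u v, u != v -> f u v <= C / 2 * x u v &
      forall i, g i <= cap i].

Lemma balance_full_sums (f : vert n -> vert n -> R) (a b : R) i :
  \sum_(u | u != Some i) f u (Some i) + a = \sum_(w | w != Some i) f (Some i) w + b <->
  \sum_u f u (Some i) + a = \sum_w f (Some i) w + b.
Proof.
rewrite [\sum_u _](bigD1 (Some i)) // [\sum_w _](bigD1 (Some i)) //= -!addrA.
by split=> [->|/addrI].
Qed.

Lemma customer_flow_cut_bound C dem cap f g (S : {set 'I_n}) :
  customer_flow C dem cap f g ->
  \sum_(i in S) dem i <= \sum_(i in S) cap i + C * (#|S|%:R - xE x S).
Proof.
case=> f_ge0 _ balance f_le g_le; set S' := Some @: S.
have net : \sum_(i in S) (dem i - g i) =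
    \sum_(v in S') \sum_(w in ~: S') f v w - \sum_(v in S') \sum_(w in ~: S') f w v.
  rewrite -sum_net_outflow sum_imset_Some; apply: eq_bigr => i _.
  by have /balance_full_sums := balance i; lra.
have out_le : \sum_(v in S') \sum_(w in ~: S') f v w <= C / 2 * (2 * (#|S|%:R - xE x S)).
  rewrite -cut_weight mulr_sumr; apply: ler_sum => v vS; rewrite mulr_sumr.
  by apply: ler_sum => w wS; apply: f_le; apply: contraTneq wS => <-; rewrite inE negbK.
have in_ge0 : 0 <= \sum_(v in S') \sum_(w in ~: S') f w v.
  apply: sumr_ge0 => v vS; apply: sumr_ge0 => w wS; apply: f_ge0.
  by apply: contraTneq wS => ->; rewrite inE negbK.
have g_le_cap : \sum_(i in S) g i <= \sum_(i in S) cap i by apply: ler_sum => i _.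
rewrite sumrB in net; lra.
Qed.

Definition customer_supply (dem : 'I_n -> R) (v : vert n) : R :=
  if v is Some i then dem i else 0.

Definition arc_capacity (C : R) (v w : vert n) : R := if v == w then 0 else C / 2 * x v w.

(* The depot can drain everything that reaches it. *)
Definition drain_capacity (C : R) (cap : 'I_n -> R) (v : vert n) : R :=
  if v is Some i then cap i else \sum_v' \sum_w arc_capacity C v' w.

Lemma setD1_None (S : {set vert n}) : S :\ None = Some @: [set i | Some i \in S].
Proof.
apply/setP => -[i|]; rewrite !inE //=.
  by rewrite (mem_imset _ _ Some_inj) inE.
by apply/esym/imsetP => -[].
Qed.

Section CutCondition.
Variables (C : R) (dem cap : 'I_n -> R).
Hypotheses (C_ge0 : 0 <= C) (x_ge0 : forall u v, u != v -> 0 <= x u v)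
           (dem_ge0 : forall i, 0 <= dem i) (cap_ge0 : forall i, 0 <= cap i).
Hypothesis cut_condition : forall S : {set 'I_n}, S != set0 ->
  \sum_(i in S) dem i <= \sum_(i in S) cap i + C * (#|S|%:R - xE x S).

Lemma arc_capacity_ge0 v w : 0 <= arc_capacity C v w.
Proof.
rewrite /arc_capacity; case: eqP => // /eqP /x_ge0.
by apply: mulr_ge0; apply: divr_ge0.
Qed.

Lemma depot_out_slack_ge0 S :
  0 <= out_slack (customer_supply dem) (drain_capacity C cap) (arc_capacity C) S.
Proof.
have depot_large : \sum_v \sum_w arc_capacity C v w <=
    drain_capacity C cap None - customer_supply dem None by rewrite /= subr0.
apply: le_trans (out_slack_setD1_le _ arc_capacity_ge0 depot_large).
rewrite setD1_None; set T := [set i | _].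
have cutE : \sum_(v in Some @: T) \sum_(w in ~: (Some @: T)) arc_capacity C v w =
    C / 2 * (2 * (#|T|%:R - xE x T)).
  rewrite -cut_weight mulr_sumr; apply: eq_bigr => v vT; rewrite mulr_sumr.
  apply: eq_bigr => w wT; rewrite /arc_capacity; case: eqP => // vw.
  by move: wT; rewrite -vw inE vT.
rewrite /out_slack cutE !sum_imset_Some /=.
have [->|T0] := eqVneq T set0; first by rewrite !big_set0 cards0 /xE big_set0; lra.
by have := cut_condition T0; lra.
Qed.

Lemma customer_flow_of_cut_condition : exists f g, customer_flow C dem cap f g.
Proof.
have c_ge0 v : 0 <= drain_capacity C cap v.
  by case: v => [i|] //=; do 2!apply: sumr_ge0 => ? _; apply: arc_capacity_ge0.
have in_ge0 S : 0 <= in_slack (customer_supply dem) (arc_capacity C) S.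
  apply: addr_ge0; first by apply: sumr_ge0 => -[i|] _ /=.
  by do 2!apply: sumr_ge0 => ? _; apply: arc_capacity_ge0.
have [f [h [f_bnd h_bnd balance]]] :=
  flow_feasible_of_slacks c_ge0 arc_capacity_ge0 depot_out_slack_ge0 in_ge0.
exists f, (fun i => h (Some i)); split=> [u v uv|i|i|u v uv|i].
- by case/andP: (f_bnd u v).
- by case/andP: (h_bnd (Some i)).
- exact/balance_full_sums/balance.
- by case/andP: (f_bnd u v); rewrite /arc_capacity (negPf uv).
- by case/andP: (h_bnd (Some i)).
Qed.

End CutCondition.
End Customers.

Lemma cut_inequalityE (R : realFieldType) (C D E K Y : R) : 0 < C ->
  (D / C + E - K <= Y) = (D <= C * Y + C * (K - E)).
Proof.
move=> C_gt0; have -> : (D / C + E - K <= Y) = (D / C <= Y + K - E).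
  by apply/idP/idP => ?; lra.
by rewrite ler_pdivrMr //; congr (_ <= _); ring.
Qed.

Theorem proposition2 (R : realType) (n N k : nat) (C : R)
    (p : 'I_N -> R) (d : 'I_N -> 'I_n -> rat) (b : 'I_n -> nat)
    (x : vert n -> vert n -> R) :
  0 < C ->
  (forall xi i, 0 <= d xi i /\ ratr (d xi i) <= C) ->
  (forall xi, 0 <= p xi) -> \sum_(xi < N) p xi = 1 ->
  (Xsub x \/ Xcvrp k p d C x) ->
  forall y : 'I_N -> 'I_n -> R,
    FLOW C d b x y <->
    (in_box b y /\
     forall S : {set 'I_n}, S != set0 -> forall xi : 'I_N,
       (\sum_(i in S) ratr (d xi i)) / C + xE x S - #|S|%:R
         <= \sum_(i in S) y xi i).
Proof.
move=> C_gt0 d_bnd _ _ x_feas y.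
have [x_sym x_bnd x_deg _] : Xsub x by case: x_feas => [|[]].
have x_ge0 u v : u != v -> 0 <= x u v by move=> /x_bnd /andP[].
have cutE (S : {set 'I_n}) xi :
    ((\sum_(i in S) ratr (d xi i)) / C + xE x S - #|S|%:R <= \sum_(i in S) y xi i) =
    (\sum_(i in S) ratr (d xi i) <= \sum_(i in S) C * y xi i + C * (#|S|%:R - xE x S)).
  by rewrite cut_inequalityE // mulr_sumr.
split=> [[box [f [g [f_ge0 g_ge0 balance f_le g_le]]]] | [box cut]]; split=> //.
  move=> S _ xi; rewrite cutE.
  apply: (customer_flow_cut_bound x_sym x_deg (f := f xi) (g := g xi)).
  by split; [exact: f_ge0 | exact: g_ge0 | exact: balance | exact: f_le | exact: g_le].
have /fin_all_exists[f /fin_all_exists[g fg]] xi : exists f g,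
    customer_flow x C (fun i => ratr (d xi i)) (fun i => C * y xi i) f g.
  apply: customer_flow_of_cut_condition => // [|i|i|S S0]; first exact: ltW.
  - by rewrite ler0q; case: (d_bnd xi i).
  - by apply: mulr_ge0; [exact: ltW | case/andP: (box xi i)].
  - by rewrite -cutE; apply: cut.
by exists f, g; split=> xi; case: (fg xi).
Qed.
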